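(* Let $L\ge n\ge 1$ and let $q(x)\in\mathrm{GF}(2)[x]/(x^L+1)$ be nonzero, represented as a polynomial of degree at most $n-1$. Let $S$ be a set of $n-1$ bit positions consecutive modulo $L$. If $w$ is chosen uniformly at random in $\mathrm{GF}(2)[x]/(x^L+1)$, then for every $y$, the probability that $q(x)w\bmod(x^L+1)$ and $y$ agree in every bit position outside $S$ equals $2^{-(L-n+1)}$.
   Context: Elements of $\mathrm{GF}(2)[x]/(x^L+1)$ are identified with polynomials $\sum_{i=0}^{L-1}c_ix^i$ over $\mathrm{GF}(2)$; bit position $i$ refers to the coefficient of $x^i$. A set of $m$ positions is consecutive modulo $L$ if it equals $\{k\bmod L,\dots,(k+m-1)\bmod L\}$ for some integer $k$. *)

From HB Require Import structures.
From mathcomp Require Import all_boot all_order all_algebra.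
Set Implicit Arguments. Unset Strict Implicit. Unset Printing Implicit Defensive.
Import GRing.Theory.
Local Open Scope ring_scope.

(* Elements of GF(2)[x]/(x^L+1): vectors of L bits c_0..c_{L-1},
   c_i being the coefficient of x^i. *)
Definition cyc_elt (L : nat) := {ffun 'I_L -> 'F_2}.

Definition to_poly (L : nat) (w : cyc_elt L) : {poly 'F_2} :=
  \poly_(i < L) (if insub i is Some j then w j else 0).

Definition mulmod_bit (L : nat) (q : {poly 'F_2}) (w : cyc_elt L) (i : 'I_L) : 'F_2 :=
  ((q * to_poly w) %% ('X^L + 1))`_i.

Definition consecutive_mod (L m : nat) (S : {set 'I_L}) : Prop :=
  exists k : nat, S = [set i : 'I_L | [exists j : 'I_m, val i == ((k + j) %% L)%N]].
Arguments consecutive_mod : clear implicits.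

Set Warnings "-notation-overridden,-ambiguous-paths".
From HB Require Import structures.
From mathcomp Require Import all_boot all_order all_algebra ring.
Set Implicit Arguments. Unset Strict Implicit. Unset Printing Implicit Defensive.
Import GRing.Theory.

Local Open Scope ring_scope.

(* Over GF(2) we have x^L + 1 = x^L - 1, and w |-> q w mod (x^L - 1) is linear.
   Let g(w) be this product with the bits in the window S erased.  Then the
   event "q w agrees with y outside S" is the fibre of g over y masked on S,
   and for an additive map between finite groups every nonempty fibre has
   #|domain| / #|image| elements.  So the probability is 1 / #|image g|.

   The heart of the proof is that g is onto the words vanishing on S, i.e. any
   prescribed values on the L - n + 1 positions outside S are achievable.
   Write q = q' x^a with q'(0) != 0; then q' is invertible modulo x^(L-n+1),
   so some w0 of size <= L-n+1 makes q' w0 take the prescribed low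
   coefficients, and q' w0 has size <= L.  Multiplying by a suitable power of
   x rotates these coefficients cyclically onto the positions outside S.
   The image therefore has 2^(L-n+1) elements. *)

HB.instance Definition _ (L : nat) := GRing.Zmodule.on (cyc_elt L).
HB.instance Definition _ (L : nat) := Finite.on (cyc_elt L).

Section AdditiveFibres.
Variables (V W : finZmodType) (g : V -> W).
Hypothesis gB : {morph g : a b / a - b}.

(* All nonempty fibres of an additive map are translates of its kernel. *)
Lemma card_fibre (y : W) (w0 : V) :
  g w0 = y -> #|[set w | g w == y]| = #|[set w | g w == 0]|.
Proof.
move=> gw0; rewrite -(card_preimset [set w | g w == 0] (@addIr _ (- w0))).
by apply: eq_card => w; rewrite !inE gB gw0 subr_eq0.
Qed.

Lemma card_domain_fibres : #|V| = (#|g @: [set: V]| * #|[set w | g w == 0%R]|)%N.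
Proof.
rewrite -cardsT -sum1_card (partition_big_imset g) -sum_nat_const.
apply: eq_bigr => _ /imsetP[w0 _ ->]; rewrite -(card_fibre (erefl (g w0))) -sum1_card.
by apply: eq_bigl => w; rewrite !inE.
Qed.

Lemma fibre_ratio (y : W) : y \in g @: [set: V] ->
  (#|[set w | g w == y]|%:R / #|V|%:R : rat) = (#|g @: [set: V]|%:R)^-1.
Proof.
case/imsetP=> w0 _ ->; rewrite (card_fibre (erefl _)) card_domain_fibres natrM.
have ker_gt0 : (0 < #|[set w | g w == 0%R]|)%N.
  by apply/card_gt0P; exists 0; rewrite inE -(subrr 0) gB subrr.
by rewrite invfM mulrC mulfVK // Num.Theory.pnatr_eq0 -lt0n.
Qed.

End AdditiveFibres.

Section CyclicShift.
Variables (F : fieldType) (L : nat).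
Hypothesis L_gt0 : (0 < L)%N.
Local Notation cycmod := ('X^L - 1 : {poly F}).

Lemma modp_XnM_cyclic (t : nat) (A : {poly F}) :
  ('X^(L * t) * A) %% cycmod = A %% cycmod.
Proof.
apply/eqP; rewrite -subr_eq0 -modpN -modpD; apply/eqP/modp_eq0.
by rewrite -{2}[A]mul1r -mulrBl dvdp_mulr // exprM (subrX1 'X^L) dvdp_mulr.
Qed.

Lemma coef_modp_fold (A : {poly F}) (i : nat) : (size A <= L + L)%N -> (i < L)%N ->
  (A %% cycmod)`_i = A`_i + A`_(i + L).
Proof.
move=> sA iL; set T := take_poly L A; set D := drop_poly L A.
have decA : A = D * cycmod + (T + D).
  by rewrite mulrBr mulr1 addrCA subrK poly_take_drop.
rewrite {1}decA modp_addl_mul_small; last first.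
  rewrite (size_XnsubC (1 : F) L_gt0) ltnS; apply: leq_trans (size_polyD _ _) _.
  by rewrite geq_max size_take_poly size_drop_poly leq_subLR sA.
by rewrite coefD coef_take_poly coef_drop_poly iL.
Qed.

Lemma coef_rotate (s j : nat) (Q : {poly F}) : (size Q <= L)%N -> (j < L)%N ->
  (('X^s * Q) %% cycmod)`_((s + j) %% L) = Q`_j.
Proof.
move=> sQ jL; rewrite {1}(divn_eq s L) exprD -mulrA mulnC modp_XnM_cyclic -modnDml.
set r := (s %% L)%N; have rL : (r < L)%N by rewrite ltn_pmod.
have sXQ : (size ('X^r * Q)%R <= L + L)%N.
  by rewrite (leq_trans (size_polyMleq _ _)) // size_polyXn leq_add // ltnW.
rewrite coef_modp_fold ?ltn_pmod // !coefXnM.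
have [rjL | Lrj] := ltnP (r + j) L.
  rewrite modn_small // ltnNge leq_addr addKn.
  rewrite ltnNge (leq_trans (leq_addr j r)) ?leq_addr //=.
  by rewrite -addnA addKn [Q`_(j + L)]nth_default ?addr0 // (leq_trans sQ) ?leq_addl.
have -> : ((r + j) %% L = r + j - L)%N.
  rewrite -{1}(subnK Lrj) modnDr modn_small // ltn_subLR //.
  by rewrite -addSn leq_add // ltnW.
have lt_r : (r + j - L < r)%N by rewrite ltn_subLR // [(L + r)%N]addnC ltn_add2l.
by rewrite lt_r subnK // ltnNge leq_addr addKn add0r.
Qed.

End CyclicShift.

Lemma split_Xn_factor (R : nzRingType) (q : {poly R}) : q != 0 ->
  exists a q', [/\ q = q' * 'X^a, q'`_0 != 0 & (size q' <= size q)%N].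
Proof.
move=> q0; have q_nz : exists i, q`_i != 0.
  by exists (size q).-1; rewrite -lead_coefE lead_coef_eq0.
case: (ex_minnP q_nz) => a qa_nz a_min; exists a, (drop_poly a q); split.
- rewrite -{1}(poly_take_drop a q) [take_poly a q](_ : _ = 0) ?add0r //.
  apply/polyP => i; rewrite coef_take_poly coef0; case: ifP => // ia.
  by apply: contraTeq ia => /a_min; rewrite leqNgt.
- by rewrite coef_drop_poly add0n qa_nz.
- by rewrite size_drop_poly leq_subr.
Qed.

(* A polynomial with nonzero constant term is invertible modulo x^m: its
   multiples reach any prescribed first m coefficients. *)
Lemma solve_mod_Xn (F : fieldType) (m : nat) (p P : {poly F}) : p`_0 != 0 ->
  exists w : {poly F}, (size w <= m)%N /\ forall j, (j < m)%N -> (p * w)`_j = P`_j.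
Proof.
move=> p0; have /Bezout_eq1_coprimepP[[u v] /= uv1] : coprimep p 'X^m.
  by apply: coprimep_expr; rewrite coprimepX /root horner_coef0.
exists ((u * P) %% 'X^m); split.
  by rewrite -ltnS -(size_polyXn F m) ltn_modp -size_poly_eq0 size_polyXn.
have /dvdpP[k ek] : 'X^m %| p * ((u * P) %% 'X^m) - P.
  have up : u * p = 1 - v * 'X^m by rewrite -uv1 addrK.
  apply/modp_eq0P; rewrite modpD modpN modp_mul mulrA [p * u]mulrC up mulrBl mul1r.
  by rewrite modpD modpN mulrAC modp_mull subr0 subrr.
by move=> j jm; apply/eqP; rewrite -subr_eq0 -coefB ek coefMXn jm.
Qed.

Lemma window_surjective (F : fieldType) (L n s : nat) (q : {poly F}) (z : nat -> F) :
  (0 < n)%N -> (n <= L)%N -> q != 0 -> (size q <= n)%N ->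
  exists2 w : {poly F}, (size w <= L)%N &
    forall j, (j < L - n.-1)%N -> ((q * w) %% ('X^L - 1))`_((s + j) %% L) = z j.
Proof.
move=> n_gt0 nL q0 sq; have L_gt0 : (0 < L)%N := leq_trans n_gt0 nL.
set m := (L - n.-1)%N.
have [a [q' [qE q'0 sq']]] := split_Xn_factor q0.
have {}sq' := leq_trans sq' sq.
have [w0 [sw0 q'w0E]] := solve_mod_Xn m (\poly_(j < m) z j) q'0.
have size_q'w0 : (size (q' * w0)%R <= L)%N.
  apply: leq_trans (size_polyMleq _ _) _.
  apply: leq_trans (_ : (n + m).-1 <= L)%N.
    by rewrite -!subn1 leq_sub2r // leq_add.
  by rewrite /m -(prednK n_gt0) addSn /= subnKC // (leq_trans (leq_pred n) nL).
exists (('X^(s + L.-1 * a) * w0) %% ('X^L - 1)).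
  by rewrite -ltnS -(size_XnsubC (1 : F) L_gt0) ltn_modp -size_poly_eq0 size_XnsubC.
move=> j jm; rewrite qE modp_mul.
have -> : q' * 'X^a * ('X^(s + L.-1 * a) * w0) = 'X^(L * a) * ('X^s * (q' * w0)).
  have eX : 'X^(L * a) * 'X^s = 'X^a * 'X^(s + L.-1 * a) :> {poly F}.
    by rewrite -!exprD -{1}(prednK L_gt0) mulSn -addnA [(s + _)%N]addnC.
  by rewrite mulrA eX; ring.
rewrite modp_XnM_cyclic // coef_rotate //; last exact: leq_trans jm (leq_subr _ _).
by rewrite q'w0E // coef_poly jm.
Qed.

Lemma cycmod_F2 (L : nat) : 'X^L + 1 = 'X^L - 1 :> {poly 'F_2}.
Proof.
by apply/polyP => i; rewrite coefD coefB (oppr_pchar2 (pchar_Fp (isT : prime 2))).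
Qed.

Lemma coef_to_poly (L : nat) (w : cyc_elt L) (i : 'I_L) : (to_poly w)`_i = w i.
Proof.
rewrite coef_poly ltn_ord; case: insubP => [j _ /val_inj -> //|].
by rewrite ltn_ord.
Qed.

Lemma to_poly_coefs (L : nat) (P : {poly 'F_2}) : (size P <= L)%N ->
  to_poly [ffun i : 'I_L => P`_i] = P.
Proof.
move=> sP; apply/polyP => i; rewrite coef_poly; case: ltnP => iL.
  by case: insubP => [j _ <-|]; [rewrite ffunE | rewrite iL].
by rewrite nth_default // (leq_trans sP iL).
Qed.

Lemma to_polyB (L : nat) (a b : cyc_elt L) : to_poly (a - b) = to_poly a - to_poly b.
Proof.
apply/polyP => i; rewrite coefB !coef_poly; case: (i < L)%N; last by rewrite subr0.
by case: insubP => [j _ _|_]; rewrite ?ffunE ?subr0.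
Qed.

(* Functions T -> R with prescribed value r0 on S: one free value per point off S. *)
Lemma card_vanishing (T R : finType) (r0 : R) (S : {set T}) :
  #|[set f : {ffun T -> R} | [forall i in S, f i == r0]]| = (#|R| ^ #|~: S|)%N.
Proof.
rewrite -cardsT -(card_pffun_on r0); apply: eq_card => f; rewrite inE.
apply/forall_inP/pffun_onP => [f_S | [f_supp _] i iS].
  split=> [|x _]; last by rewrite inE.
  by apply/subsetP => i; rewrite !inE; apply: contra => /f_S ->.
by apply: contraT => /(subsetP f_supp); rewrite !inE iS.
Qed.

Section Windows.
Variables (L m k : nat).
Hypotheses (L_gt0 : (0 < L)%N) (mL : (m <= L)%N).

Definition window : {set 'I_L} :=
  [set i : 'I_L | [exists j : 'I_m, val i == ((k + j) %% L)%N]].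

Lemma card_window : #|window| = m.
Proof.
have -> : window = [set Ordinal (ltn_pmod (k + val j) L_gt0) | j in [set: 'I_m]].
  apply/setP => i; rewrite inE; apply/existsP/imsetP => [[j /eqP e] | [j _ ->]].
    by exists j => //; apply/val_inj.
  by exists j.
rewrite card_imset ?cardsT ?card_ord // => j1 j2 /(congr1 val) /= /eqP.
by rewrite eqn_modDl !modn_small ?(leq_trans (ltn_ord _) mL) // => /eqP/val_inj.
Qed.

Lemma outside_window (i : 'I_L) : i \notin window ->
  exists2 j, (j < L - m)%N & val i = ((k + m + j) %% L)%N.
Proof.
move=> iS; set j' := ((val i + (L - k %% L)) %% L)%N.
have kj' : ((k + j') %% L = val i)%N.
  rewrite /j' modnDmr addnCA {1}(divn_eq k L) -addnA.
  rewrite subnKC ?(ltnW (ltn_pmod _ L_gt0)) //.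
  by rewrite -mulSnr [(i + _)%N]addnC modnMDl modn_small.
have m_j' : (m <= j')%N.
  rewrite leqNgt; apply: contra iS => j'm; rewrite inE.
  by apply/existsP; exists (Ordinal j'm); rewrite /= kj'.
have j'L : (j' < L)%N by rewrite ltn_pmod.
exists (j' - m)%N; first by rewrite ltn_sub2r // (leq_ltn_trans m_j' j'L).
by rewrite -addnA subnKC.
Qed.

End Windows.

Section MaskedProduct.
Variables (L : nat) (q : {poly 'F_2}) (S : {set 'I_L}).

Definition mask (f : cyc_elt L) : cyc_elt L := [ffun i => if i \in S then 0 else f i].

Definition masked_product (w : cyc_elt L) : cyc_elt L :=
  mask [ffun i => mulmod_bit q w i].

Lemma masked_productB : {morph masked_product : a b / a - b}.
Proof.
move=> a b; apply/ffunP => i; rewrite !ffunE; case: (i \in S); first by rewrite subr0.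
by rewrite /mulmod_bit to_polyB mulrBr modpD modpN coefB.
Qed.

Lemma masked_product_event (y : cyc_elt L) :
  [set w : cyc_elt L | [forall i : 'I_L, (i \notin S) ==> (mulmod_bit q w i == y i)]]
  = [set w | masked_product w == mask y].
Proof.
apply/setP => w; rewrite !inE; apply/forallP/eqP => [w_y | w_y i].
  apply/ffunP => i; rewrite !ffunE; case: ifP => // iS.
  by apply/eqP; have := w_y i; rewrite iS.
apply/implyP => iS; have := congr1 (fun f : cyc_elt L => f i) w_y.
by rewrite /= !ffunE (negbTE iS) => ->.
Qed.

End MaskedProduct.

Lemma masked_product_image (L n k : nat) (q : {poly 'F_2}) :
  (0 < n)%N -> (n <= L)%N -> q != 0 -> (size q <= n)%N ->
  masked_product q (window L n.-1 k) @: [set: cyc_elt L]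
  = [set z : cyc_elt L | [forall i in window L n.-1 k, z i == 0]].
Proof.
move=> n_gt0 nL q0 sq; have L_gt0 : (0 < L)%N := leq_trans n_gt0 nL.
apply/setP => z; rewrite inE; apply/imsetP/forall_inP => [[w _ ->] i iS | z_S].
  by rewrite !ffunE iS.
pose target j := (to_poly z)`_((k + n.-1 + j) %% L).
have [W sW W_z] := window_surjective (k + n.-1) target n_gt0 nL q0 sq.
exists [ffun i : 'I_L => W`_i]; rewrite ?inE //; apply/ffunP => i; rewrite !ffunE.
case: ifP => [iS | /negbT iS]; first exact/eqP/z_S.
have [j jL i_j] := outside_window L_gt0 iS.
by rewrite /mulmod_bit to_poly_coefs // cycmod_F2 -coef_to_poly i_j W_z.
Qed.

Theorem mainTheorem7 (L n : nat) (q : {poly 'F_2}) (S : {set 'I_L})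
  (y : cyc_elt L) :
  (1 <= n)%N -> (n <= L)%N -> q != 0 -> (size q <= n)%N ->
  consecutive_mod L n.-1 S ->
  (#|[set w : cyc_elt L | [forall i : 'I_L, (i \notin S) ==> (mulmod_bit q w i == y i)]]|%:R
     / (#|[set: cyc_elt L]|)%:R : rat)
  = 2%:R ^- (L - n.-1).
Proof.
move=> n_gt0 nL q0 sq [k ->]; have L_gt0 : (0 < L)%N := leq_trans n_gt0 nL.
have image_eq := masked_product_image k n_gt0 nL q0 sq.
have y_in_image : mask (window L n.-1 k) y \in masked_product q (window L n.-1 k) @: setT.
  by rewrite image_eq inE; apply/forall_inP => i iS; rewrite ffunE iS.
have card_outside : #|~: window L n.-1 k| = (L - n.-1)%N.
  rewrite -[L in RHS]card_ord -(cardsC (window L n.-1 k)) card_window ?addKn //.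
  exact: leq_trans (leq_pred n) nL.
rewrite masked_product_event cardsT (fibre_ratio (masked_productB _ _) y_in_image).
by rewrite image_eq card_vanishing card_Fp // card_outside natrX.
Qed.
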